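(* Let $p(t)=\sum_{k=0}^\infty a_kt^k$ be a real power series with $-1<a_i<1$ for all $i\ge0$ and $\sum_{i=0}^\infty|a_i|\le1$. Let $p^{[1]}=p$, $p^{[n+1]}=p(p^{[n]})$, $p^{[n]}(t)=\sum_{k=0}^\infty a_k^{[n]}t^k$, and $a^{[n]}=\sup\{|a_k^{[n]}|:k\ge1\}$. Then $\lim_{n\to\infty}a^{[n]}=0$.
   Context: Composition is composition of formal power series; under $\sum|a_i|\le1$ the coefficients of each iterate are given by absolutely convergent sums. *)

From HB Require Import structures.
From mathcomp Require Import all_boot all_order all_algebra.
From mathcomp Require Import all_classical all_reals all_analysis.
Set Implicit Arguments. Unset Strict Implicit. Unset Printing Implicit Defensive.
Import Order.TTheory GRing.Theory Num.Theory.
Import numFieldNormedType.Exports.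
Local Open Scope ring_scope.

(* A real formal power series sum_k b k t^k is represented by its
   coefficient sequence b : nat -> R. *)

Fixpoint pow_coef (R : realType) (b : nat -> R) (j : nat) : nat -> R :=
  match j with
  | 0 => fun k => (k == 0)%:R
  | j'.+1 => fun k => \sum_(i < k.+1) b i * pow_coef b j' (k - i)%N
  end.

(* Composition p(q) of power series with coefficients a, b:
   coefficient of t^k is sum_{j>=0} a_j [t^k] q^j (an infinite series,
   the limit of its partial sums; absolutely convergent under the
   standing hypotheses). *)
Definition comp_coef (R : realType) (a b : nat -> R) (k : nat) : R :=
  limn (series (fun j => a j * pow_coef b j k)).

(* iterp a n = coefficients of p^{[n]}: p^{[0]}(t) = t,
   p^{[n+1]} = p(p^{[n]}); hence p^{[1]} = p(t) = p. *)
Fixpoint iterp (R : realType) (a : nat -> R) (n : nat) : nat -> R :=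
  match n with
  | 0 => fun k => (k == 1)%:R
  | m.+1 => comp_coef a (iterp a m)
  end.

Definition sup_coef (R : realType) (a : nat -> R) (n : nat) : \bar R :=
  ereal_sup [set (`|iterp a n k|)%:E | k in [set k : nat | (1 <= k)%N]].

From HB Require Import structures.
From mathcomp Require Import all_boot all_order all_algebra.
From mathcomp Require Import all_classical all_reals all_analysis.
From mathcomp Require Import lra.
Import Order.TTheory GRing.Theory Num.Theory.
Import numFieldNormedType.Exports.
Local Open Scope ring_scope.

Set Implicit Arguments. Unset Strict Implicit. Unset Printing Implicit Defensive.

(* Since [|a^[n]_k| <= b^[n]_k] for [b = |a|], it suffices to treat the
   generating function [p] of a defective offspring law [b] (nonnegative,
   total mass at most 1, every [b i < 1]).  Write [p^[n+1] = p^[n] o p]: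
   for [k >= 1] the [k]-th coefficient is [sum_z b^[n]_z [t^k] p^z], and
   two facts make it small.
   (1) All coefficients of [p^z] tend to 0 uniformly as [z -> oo]: if the
   largest coefficient stayed above [mu > 0], a near-maximal coefficient of
   a high power would, walking back along two indices [u < v] with
   [b u, b v > 0], give more than [1 / mu] distinct near-maximal
   coefficients of a lower power, whose sum exceeds 1.
   (2) For fixed [z >= 1], [b^[n]_z -> 0]: for a suitable [t] in (0, 1],
   [p^[n](0) + b^[n]_z t^z <= p^[n](t)], and [p^[n](t) - p^[n](0) -> 0]
   (take [t] the extinction probability [q = lim p^[n](0)] if [q > 0],
   and [t = 1/2] if [q = 0], when [p] contracts geometrically near 0). *)

Section Subprob.
Variable R : realType.
Implicit Types (u v w b c : nat -> R).

Definition subprob u := (forall i, 0 <= u i) /\ (forall n, \sum_(i < n) u i <= 1).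

Definition cauchy_prod u v := fun k => \sum_(i < k.+1) u i * v (k - i)%N.

Lemma subprob_ge0 u i : subprob u -> 0 <= u i.
Proof. by case. Qed.

Lemma subprob_le1 u i : subprob u -> u i <= 1.
Proof.
move=> [u0 u1]; apply: le_trans (u1 i.+1).
by rewrite big_ord_recr /= lerDr; exact: sumr_ge0.
Qed.

Lemma sum_cauchy_prod u v n :
  \sum_(k < n) cauchy_prod u v k = \sum_(i < n) u i * \sum_(l < n - i) v l.
Proof.
elim: n => [|n IH]; first by rewrite !big_ord0.
rewrite big_ord_recr /= IH.
have -> : \sum_(i < n.+1) u i * \sum_(l < n.+1 - i) v l
        = \sum_(i < n.+1) (u i * \sum_(l < n - i) v l + u i * v (n - i)%N).
  apply: eq_bigr => i _; rewrite subSn; last by rewrite -ltnS.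
  by rewrite big_ord_recr /= mulrDr.
by rewrite big_split /= big_ord_recr /= subnn big_ord0 mulr0 addr0.
Qed.

Lemma subprob_cauchy_prod u v : subprob u -> subprob v -> subprob (cauchy_prod u v).
Proof.
move=> [u0 u1] [v0 v1]; split.
  by move=> k; apply: sumr_ge0 => i _; exact: mulr_ge0.
move=> n; rewrite sum_cauchy_prod; apply: le_trans (u1 n).
apply: ler_sum => i _; rewrite -[leRHS]mulr1.
exact: ler_wpM2l.
Qed.

Lemma pow_coefS c j : pow_coef c j.+1 = cauchy_prod c (pow_coef c j).
Proof. by []. Qed.

Lemma subprob_pow_coef c j : subprob c -> subprob (pow_coef c j).
Proof.
move=> hc; elim: j => [|j IH]; last by rewrite pow_coefS; exact: subprob_cauchy_prod.
split; first by move=> i; exact: ler0n.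
case=> [|n]; first by rewrite big_ord0.
by rewrite big_ord_recl big1 /= ?addr0 // => i _.
Qed.

Lemma pow_coef_ge0 c j k : subprob c -> 0 <= pow_coef c j k.
Proof. by move=> hc; apply: subprob_ge0; exact: subprob_pow_coef. Qed.

Lemma pow_coef_le1 c j k : subprob c -> pow_coef c j k <= 1.
Proof. by move=> hc; apply: subprob_le1; exact: subprob_pow_coef. Qed.

Lemma cauchy_prod_polyE u v (p q : {poly R}) k :
  (forall i, (i <= k)%N -> u i = p`_i) -> (forall i, (i <= k)%N -> v i = q`_i) ->
  cauchy_prod u v k = (p * q)`_k.
Proof.
move=> hu hv; rewrite coefM; apply: eq_bigr => i _.
have ik : (i <= k)%N by rewrite -ltnS.
by rewrite hu // hv // leq_subr.
Qed.

Lemma cauchy_prodA u v w :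
  cauchy_prod (cauchy_prod u v) w = cauchy_prod u (cauchy_prod v w).
Proof.
apply: funext => k.
pose P f : {poly R} := \poly_(i < k.+1) f i.
have hP f i : (i <= k)%N -> f i = (P f)`_i by rewrite coef_poly ltnS => ->.
have hPM f g i : (i <= k)%N -> cauchy_prod f g i = (P f * P g)`_i.
  by move=> ik; apply: cauchy_prod_polyE => j jk; apply: hP; exact: leq_trans jk ik.
rewrite (@cauchy_prod_polyE _ _ (P u * P v) (P w)); [|exact: hPM|exact: hP].
rewrite (@cauchy_prod_polyE _ _ (P u) (P v * P w)) ?mulrA //.
  exact: hP.
exact: hPM.
Qed.

Lemma pow_coefD c m l :
  cauchy_prod (pow_coef c m) (pow_coef c l) = pow_coef c (m + l).
Proof.
elim: m => [|m IH]; last by rewrite addSn !pow_coefS cauchy_prodA IH.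
apply: funext => k; rewrite /cauchy_prod big_ord_recl big1 => [|i _]; last first.
  by rewrite /= mul0r.
by rewrite /= mul1r subn0 addr0.
Qed.

Lemma pow_coef1 c k : pow_coef c 1 k = c k.
Proof.
rewrite /= big_ord_recr /= subnn eqxx mulr1 big1 ?add0r // => i _.
by rewrite subn_eq0 leqNgt ltn_ord mulr0.
Qed.

End Subprob.

Section NonnegSeries.
Variable R : realType.

Lemma nneseries_bounded (t : nat -> R) (B : R) : (forall i, 0 <= t i) ->
  (forall n, \sum_(i < n) t i <= B) ->
  cvgn (series t) /\ (limn (series t))%:E = (\sum_(i <oo) (t i)%:E)%E.
Proof.
move=> t0 tB.
have cvt : cvgn (series t).
  apply: nondecreasing_is_cvgn.
    apply/nondecreasing_seqP => n.
    by rewrite !seriesEord /= big_ord_recr /= lerDl.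
  by exists B; move=> _ [n _ <-]; rewrite seriesEord; exact: tB.
split=> //; rewrite -EFin_lim //.
by apply: congr_lim; apply: funext => n /=; rewrite sumEFin seriesEnat.
Qed.

Lemma nneseries_finite (f : nat -> \bar R) N : (forall m, (0 <= f m)%E) ->
  (forall m, (N <= m)%N -> f m = 0%E) ->
  (\sum_(m <oo) f m = \sum_(m < N) f m)%E.
Proof.
move=> f0 fN; rewrite (nneseries_split 0 N) // eseries0 ?adde0; last first.
  by move=> i; rewrite add0n => /fN.
by rewrite add0n big_mkord.
Qed.

Lemma nneseries_diag (x : nat -> nat -> \bar R) : (forall m l, 0 <= x m l)%E ->
  (\sum_(m <oo) \sum_(l <oo) x m l =
   \sum_(s <oo) \sum_(m < s.+1) x m (s - m)%N)%E.
Proof.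
move=> x0; pose y s m := if (m <= s)%N then x m (s - m)%N else 0%E.
have y0 s m : (0 <= y s m)%E by rewrite /y; case: ifP.
transitivity (\sum_(s <oo) \sum_(m <oo) y s m)%E; last first.
  apply: eq_eseriesr => s _; rewrite (@nneseries_finite _ s.+1) //.
  - by apply: eq_bigr => i _; rewrite /y -ltnS ltn_ord.
  - by move=> m; rewrite /y ltnNge => /negbTE ->.
rewrite [RHS](@nneseries_interchange R y xpredT xpredT) //.
apply: eq_eseriesr => m _.
rewrite -(@eseries_mkcond _ (fun s => (m <= s)%N) (fun s => x m (s - m)%N)).
rewrite -ereal_series -(@nneseries_addn _ (fun s => x m (s - m)%N) m) //.
by apply: eq_eseriesr => l _; rewrite addnK.
Qed.

End NonnegSeries.

Section Composition.
Variable R : realType.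
Implicit Types (u v w b c : nat -> R).

Lemma comp_coef_subprob_series u c k : subprob u -> subprob c ->
  cvgn (series (fun j => u j * pow_coef c j k)) /\
  (comp_coef u c k)%:E = (\sum_(j <oo) (u j * pow_coef c j k)%:E)%E.
Proof.
move=> hu hc; apply: (@nneseries_bounded _ _ 1).
  by move=> j; rewrite mulr_ge0 ?(subprob_ge0 _ hu) ?pow_coef_ge0.
move=> n; apply: le_trans (hu.2 n); apply: ler_sum => j _.
by rewrite ler_piMr ?(subprob_ge0 _ hu) ?pow_coef_le1.
Qed.

Lemma comp_coefE u c k : subprob u -> subprob c ->
  (comp_coef u c k)%:E = (\sum_(j <oo) (u j * pow_coef c j k)%:E)%E.
Proof. by move=> hu hc; case: (comp_coef_subprob_series k hu hc). Qed.

Lemma subprob_nneseries_le1 u : subprob u -> (\sum_(j <oo) (u j)%:E <= 1)%E.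
Proof.
move=> [u0 u1]; have [cvu <-] := nneseries_bounded u0 u1.
rewrite lee_fin; apply: limr_le cvu _; apply: nearW => n.
by rewrite seriesEord; exact: u1.
Qed.

Lemma subprob_comp u c : subprob u -> subprob c -> subprob (comp_coef u c).
Proof.
move=> hu hc.
have t0 j k : (0 <= (u j * pow_coef c j k)%:E)%E.
  by rewrite lee_fin mulr_ge0 ?(subprob_ge0 _ hu) ?pow_coef_ge0.
split=> [k|n]; first by rewrite -lee_fin comp_coefE // nneseries_ge0.
rewrite -lee_fin -sumEFin.
under eq_bigr => k _ do rewrite comp_coefE //.
rewrite -nneseries_sum //; apply: le_trans (subprob_nneseries_le1 hu).
apply: lee_nneseries => [j _ _|j _]; first exact: sume_ge0.
rewrite sumEFin lee_fin -mulr_sumr ler_piMr ?(subprob_ge0 _ hu) //.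
exact: (subprob_pow_coef j hc).2.
Qed.

Lemma cauchy_prod_comp u v c : subprob u -> subprob v -> subprob c ->
  cauchy_prod (comp_coef u c) (comp_coef v c) = comp_coef (cauchy_prod u v) c.
Proof.
move=> hu hv hc; apply: funext => k.
have P0 j i : 0 <= pow_coef c j i by exact: pow_coef_ge0.
have u0 i : 0 <= u i := subprob_ge0 i hu.
have v0 i : 0 <= v i := subprob_ge0 i hv.
apply: EFin_inj; rewrite (comp_coefE k (subprob_cauchy_prod hu hv) hc) -sumEFin.
have prodE i : ((comp_coef u c i) * (comp_coef v c (k - i)))%:E =
  (\sum_(m <oo) \sum_(l <oo)
     ((u m * pow_coef c m i) * (v l * pow_coef c l (k - i)))%:E)%E.
  rewrite EFinM (comp_coefE i hu hc) muleC -nneseriesZl; last first.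
    by move=> m _; rewrite lee_fin mulr_ge0.
  apply: eq_eseriesr => m _; rewrite muleC (comp_coefE (k - i) hv hc).
  rewrite -nneseriesZl; last by move=> l _; rewrite lee_fin mulr_ge0.
  by apply: eq_eseriesr => l _; rewrite -EFinM.
under eq_bigr => i _ do rewrite prodE.
rewrite -nneseries_sum; last first.
  move=> i m _; apply: nneseries_ge0 => l _ _.
  by rewrite lee_fin !mulr_ge0.
transitivity (\sum_(m <oo) \sum_(l <oo)
   ((u m * v l) * pow_coef c (m + l) k)%:E)%E.
  apply: eq_eseriesr => m _; rewrite -nneseries_sum; last first.
    by move=> i l _; rewrite lee_fin !mulr_ge0.
  apply: eq_eseriesr => l _; rewrite sumEFin; congr (_%:E).
  rewrite -pow_coefD /cauchy_prod mulr_sumr; apply: eq_bigr => i _.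
  by rewrite mulrACA.
rewrite nneseries_diag; last by move=> m l; rewrite lee_fin !mulr_ge0.
apply: eq_eseriesr => s _; rewrite sumEFin; congr (_%:E).
by rewrite mulr_suml; apply: eq_bigr => i _; rewrite subnKC // -ltnS.
Qed.

Lemma pow_coef_comp b c j : subprob b -> subprob c ->
  pow_coef (comp_coef b c) j = comp_coef (pow_coef b j) c.
Proof.
move=> hb hc; elim: j => [|j IH].
  apply: funext => k; apply: EFin_inj.
  rewrite (comp_coefE k (subprob_pow_coef 0 hb) hc) (@nneseries_finite _ _ 1).
  - by rewrite big_ord_recl big_ord0 /= mul1r adde0.
  - by move=> m; rewrite lee_fin mulr_ge0 ?pow_coef_ge0.
  - by case=> // m _ /=; rewrite mul0r.
by rewrite !pow_coefS IH cauchy_prod_comp //; exact: subprob_pow_coef.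
Qed.

Lemma comp_coefA a b c : subprob a -> subprob b -> subprob c ->
  comp_coef a (comp_coef b c) = comp_coef (comp_coef a b) c.
Proof.
move=> ha hb hc; apply: funext => k.
have P0 j i : 0 <= pow_coef c j i by exact: pow_coef_ge0.
have Q0 j i : 0 <= pow_coef b j i by exact: pow_coef_ge0.
have a0 i : 0 <= a i := subprob_ge0 i ha.
apply: EFin_inj.
rewrite (comp_coefE k ha (subprob_comp hb hc)).
rewrite (comp_coefE k (subprob_comp ha hb) hc).
transitivity (\sum_(j <oo) \sum_(m <oo)
   (a j * (pow_coef b j m * pow_coef c m k))%:E)%E.
  apply: eq_eseriesr => j _.
  rewrite pow_coef_comp // EFinM (comp_coefE k (subprob_pow_coef j hb) hc).
  rewrite -nneseriesZl; first by apply: eq_eseriesr => m _; rewrite EFinM.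
  by move=> m _; rewrite lee_fin mulr_ge0.
rewrite nneseries_interchange; last by move=> j m; rewrite lee_fin !mulr_ge0.
apply: eq_eseriesr => m _; rewrite EFinM muleC (comp_coefE m ha hb).
rewrite -nneseriesZl; last by move=> j _; rewrite lee_fin mulr_ge0.
by apply: eq_eseriesr => j _; rewrite -EFinM mulrA mulrC.
Qed.

Definition id_coef : nat -> R := fun k => (k == 1)%:R.

Lemma subprob_id_coef : subprob id_coef.
Proof.
split; first by move=> i; exact: ler0n.
case=> [|[|n]]; first by rewrite big_ord0.
  by rewrite big_ord_recl big_ord0 /id_coef /= addr0.
by rewrite big_ord_recl big_ord_recl big1 /id_coef /= ?add0r ?addr0.
Qed.

Lemma pow_coef_id j k : pow_coef id_coef j k = (k == j)%:R.
Proof.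
elim: j k => [|j IH] [|k] //.
  by rewrite /= big_ord_recl big_ord0 /id_coef /= mul0r addr0.
rewrite /= big_ord_recl /id_coef /= mul0r add0r big_ord_recl big1 /=.
  by rewrite mul1r addr0 subSS subn0 IH eqSS.
by move=> i _; rewrite mul0r.
Qed.

Lemma comp_id_coef c : subprob c -> comp_coef id_coef c = c.
Proof.
move=> hc; apply: funext => k; apply: EFin_inj.
rewrite (comp_coefE k subprob_id_coef hc) (@nneseries_finite _ _ 2).
- rewrite big_ord_recl big_ord_recl big_ord0 /id_coef /= mul0r mul1r.
  by rewrite add0e adde0 -(pow_coef1 c k).
- by move=> m; rewrite lee_fin mulr_ge0 ?ler0n ?pow_coef_ge0.
- by case=> [|[|m]] //= _; rewrite /id_coef /= mul0r.
Qed.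

Lemma comp_coef_id b : subprob b -> comp_coef b id_coef = b.
Proof.
move=> hb; apply: funext => k; apply: EFin_inj.
rewrite (comp_coefE k hb subprob_id_coef) (@nneseries_finite _ _ k.+1).
- rewrite big_ord_recr /= pow_coef_id eqxx mulr1 big1 ?add0e // => i _.
  by rewrite pow_coef_id eq_sym (ltn_eqF (ltn_ord i)) mulr0.
- by move=> m; rewrite lee_fin pow_coef_id mulr_ge0 ?ler0n ?(subprob_ge0 _ hb).
- by move=> m km; rewrite pow_coef_id eq_sym (gtn_eqF km) mulr0.
Qed.

Lemma iterp0 b : iterp b 0 = id_coef.
Proof. by []. Qed.

Lemma iterpS b n : iterp b n.+1 = comp_coef b (iterp b n).
Proof. by []. Qed.

Lemma subprob_iterp b n : subprob b -> subprob (iterp b n).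
Proof.
move=> hb; elim: n => [|n IH]; first exact: subprob_id_coef.
exact: subprob_comp.
Qed.

Lemma iterpSr b n : subprob b -> iterp b n.+1 = comp_coef (iterp b n) b.
Proof.
move=> hb; elim: n => [|n IH].
  by rewrite iterpS iterp0 comp_coef_id // comp_id_coef.
by rewrite iterpS {1}IH comp_coefA //; exact: subprob_iterp.
Qed.

End Composition.

Arguments id_coef {R}.

Section GeneratingFunction.
Variable R : realType.
Implicit Types (u b c : nat -> R) (s t : R).

Definition cst_coef t : nat -> R := fun k => if k == 0 then t else 0.

(* Evaluation at t is composition with the constant series t, so that
   associativity of composition yields [pgf_comp]. *)
Definition pgf u t := comp_coef u (cst_coef t) 0.

Lemma subprob_cst_coef t : 0 <= t <= 1 -> subprob (cst_coef t).
Proof.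
move=> /andP[t0 t1]; split; first by case.
case=> [|n]; first by rewrite big_ord0.
by rewrite big_ord_recl big1 /= ?addr0.
Qed.

Lemma pow_coef_cst t j k : pow_coef (cst_coef t) j k = (k == 0)%:R * t ^+ j.
Proof.
elim: j k => [|j IH] k; first by rewrite expr0 mulr1.
rewrite /= big_ord_recl big1 ?addr0; last by move=> i _; rewrite /cst_coef mul0r.
by rewrite /cst_coef /= subn0 IH exprS mulrCA.
Qed.

Lemma pgfE u t : subprob u -> 0 <= t <= 1 ->
  (pgf u t)%:E = (\sum_(j <oo) (u j * t ^+ j)%:E)%E.
Proof.
move=> hu ht; rewrite /pgf (comp_coefE 0 hu (subprob_cst_coef ht)).
by apply: eq_eseriesr => j _; rewrite pow_coef_cst mul1r.
Qed.

Lemma comp_cst_coef u t : subprob u -> 0 <= t <= 1 ->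
  comp_coef u (cst_coef t) = cst_coef (pgf u t).
Proof.
move=> hu ht; apply: funext => -[|k] //.
apply: EFin_inj; rewrite (comp_coefE k.+1 hu (subprob_cst_coef ht)).
rewrite (@nneseries_finite _ _ 0) ?big_ord0 // => m.
  by rewrite pow_coef_cst mul0r mulr0.
by move=> _; rewrite pow_coef_cst mul0r mulr0.
Qed.

Lemma pgf_ge0_le1 u t : subprob u -> 0 <= t <= 1 -> 0 <= pgf u t <= 1.
Proof.
move=> hu ht; have h := subprob_comp hu (subprob_cst_coef ht).
by rewrite /pgf (subprob_ge0 0 h) (subprob_le1 0 h).
Qed.

Lemma pgf_comp b c t : subprob b -> subprob c -> 0 <= t <= 1 ->
  pgf (comp_coef b c) t = pgf b (pgf c t).
Proof.
move=> hb hc ht; have hct := subprob_cst_coef ht.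
by rewrite /pgf -comp_coefA // comp_cst_coef.
Qed.

Lemma pgf0 u : subprob u -> pgf u 0 = u 0.
Proof.
move=> hu; apply: EFin_inj; rewrite pgfE ?lexx ?ler01 //.
rewrite (@nneseries_finite _ _ 1).
- by rewrite big_ord_recl big_ord0 expr0 mulr1 adde0.
- by move=> m; rewrite lee_fin mulr_ge0 ?exprn_ge0 ?(subprob_ge0 _ hu).
- by case=> // m _; rewrite expr0n /= mulr0.
Qed.

Lemma pgf_id_coef t : 0 <= t <= 1 -> pgf id_coef t = t.
Proof. by move=> ht; rewrite /pgf comp_id_coef //; exact: subprob_cst_coef. Qed.

Lemma le_pgf u s t : subprob u -> 0 <= s -> s <= t -> t <= 1 -> pgf u s <= pgf u t.
Proof.
move=> hu s0 st t1.
have t0 := le_trans s0 st.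
rewrite -lee_fin !pgfE ?s0 ?t0 ?t1 ?(le_trans st t1) //.
apply: lee_nneseries => [j _ _|j _].
  by rewrite lee_fin mulr_ge0 ?exprn_ge0 ?(subprob_ge0 _ hu).
by rewrite lee_fin ler_wpM2l ?(subprob_ge0 _ hu) // lerXn2r.
Qed.

Lemma psum_le_pgf u t N : subprob u -> 0 <= t <= 1 ->
  \sum_(j < N) u j * t ^+ j <= pgf u t.
Proof.
move=> hu /[dup] ht /andP[t0 _]; rewrite -lee_fin pgfE // -sumEFin.
have := @nneseries_lim_ge R (fun j => (u j * t ^+ j)%:E) xpredT 0 N.
rewrite big_mkord; apply=> n _ _.
by rewrite lee_fin mulr_ge0 ?exprn_ge0 ?(subprob_ge0 _ hu).
Qed.

Lemma pgf_le u t M : subprob u -> 0 <= t <= 1 ->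
  (forall N, \sum_(j < N) u j * t ^+ j <= M) -> pgf u t <= M.
Proof.
move=> hu /[dup] ht /andP[t0 _] hM; rewrite -lee_fin pgfE //; apply: lime_le.
  apply: is_cvg_nneseries => n _ _.
  by rewrite lee_fin mulr_ge0 ?exprn_ge0 ?(subprob_ge0 _ hu).
by apply: nearW => N; rewrite sumEFin lee_fin big_mkord.
Qed.

Lemma coef0_coefX_le_pgf u t z : subprob u -> 0 <= t <= 1 -> (1 <= z)%N ->
  u 0 + u z * t ^+ z <= pgf u t.
Proof.
move=> hu /[dup] ht /andP[t0 _] z1; apply: le_trans (psum_le_pgf z.+1 hu ht).
rewrite big_ord_recr /= lerD2r; case: z z1 => // z _.
rewrite big_ord_recl /= expr0 mulr1 lerDl; apply: sumr_ge0 => i _.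
by rewrite mulr_ge0 ?exprn_ge0 ?(subprob_ge0 _ hu).
Qed.

Lemma subrXX_le s t j : 0 <= s -> s <= t -> t <= 1 ->
  t ^+ j - s ^+ j <= j%:R * (t - s).
Proof.
move=> s0 st t1; elim: j => [|j IH]; first by rewrite !expr0 subrr mul0r.
have X0 : s ^+ j <= t ^+ j by rewrite lerXn2r // nnegrE (le_trans s0 st).
have Y0 : 0 <= s ^+ j by exact: exprn_ge0.
have Y1 : s ^+ j <= 1 by apply: exprn_ile1 => //; exact: le_trans st t1.
rewrite !exprS -natr1.
set X := t ^+ j in X0 IH *; set Y := s ^+ j in X0 Y0 Y1 IH *.
nra.
Qed.

Lemma psum_lipschitz b s t N : subprob b -> 0 <= s -> s <= t -> t <= 1 ->
  \sum_(j < N) b j * t ^+ j <= \sum_(j < N) b j * s ^+ j + (N * N)%:R * (t - s).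
Proof.
move=> hb s0 st t1; rewrite -lerBlDl -sumrB.
apply: le_trans (_ : \sum_(j < N) (N%:R * (t - s)) <= _); last first.
  by rewrite sumr_const card_ord natrM -mulrA [in leRHS]mulr_natl.
apply: ler_sum => j _; rewrite -mulrBr.
have b0 := subprob_ge0 j hb; have b1 := subprob_le1 j hb.
have h1 := subrXX_le j s0 st t1.
have h2 : (j%:R : R) <= N%:R by rewrite ler_nat ltnW.
have h3 : 0 <= t ^+ j - s ^+ j.
  by rewrite subr_ge0 lerXn2r // nnegrE (le_trans s0 st).
have h4 : 0 <= t - s by rewrite subr_ge0.
nra.
Qed.

Lemma psum_le_coef1 b s N : subprob b -> b 0 = 0 -> 0 <= s <= 1 ->
  \sum_(j < N) b j * s ^+ j <= s * (b 1 + (1 - b 1) * s).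
Proof.
move=> hb b00 /andP[s0 s1].
have t0 j : 0 <= b j * s ^+ j by rewrite mulr_ge0 ?exprn_ge0 ?(subprob_ge0 _ hb).
apply: le_trans (_ : \sum_(j < N.+2) b j * s ^+ j <= _).
  by rewrite !big_ord_recr /= -addrA lerDl addr_ge0.
rewrite !big_ord_recl /= b00 mul0r add0r expr1.
have hB := hb.2 N.+2; rewrite !big_ord_recl /= b00 add0r in hB.
set B := \sum_(i < N) b (bump 0 (bump 0 i)) in hB *.
have : \sum_(i < N) b (bump 0 (bump 0 i)) * s ^+ (bump 0 (bump 0 i)) <= s ^+ 2 * B.
  rewrite /B mulr_sumr; apply: ler_sum => i _.
  rewrite /bump !add1n -[X in s ^+ X]addn2 exprD mulrC mulrA.
  rewrite expr2 -[leRHS]mul1r !mulrA.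
  apply: ler_wpM2r; first exact: subprob_ge0.
  by do 2!apply: ler_wpM2r => //; exact: exprn_ile1.
have B0 : 0 <= B by apply: sumr_ge0 => i _; exact: subprob_ge0.
rewrite expr2; nra.
Qed.

End GeneratingFunction.

Section Extinction.
Variable R : realType.
Variable b : nat -> R.
Hypothesis hb : subprob b.

Let y n := iterp b n 0.

Let y01 n : 0 <= y n <= 1.
Proof.
have h := subprob_iterp n hb.
by rewrite /y (subprob_ge0 0 h) (subprob_le1 0 h).
Qed.

Let yS n : y n.+1 = pgf b (y n).
Proof.
have h := subprob_iterp n hb.
rewrite /y -(pgf0 (subprob_iterp n.+1 hb)) -(pgf0 h).
by rewrite iterpS pgf_comp // lexx ler01.
Qed.

Let y_nondecreasing : nondecreasing_seq y.
Proof.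
apply/nondecreasing_seqP; elim=> [|n IH].
  by have /andP[] := y01 1.
have /andP[yn0 _] := y01 n; have /andP[_ yn1] := y01 n.+1.
by rewrite (yS n.+1) {1}(yS n); exact: le_pgf.
Qed.

Let y_has_sup : has_sup (range y).
Proof.
split; first by exists (y 0), 0%N.
by exists 1 => _ [n _ <-]; case/andP: (y01 n).
Qed.

Let q := sup (range y).

Let y_le_q n : y n <= q.
Proof. by apply: (sup_upper_bound y_has_sup); exists n. Qed.

Let q_le1 : q <= 1.
Proof.
apply: ge_sup; first by exists (y 0), 0%N.
by move=> _ [n _ <-]; case/andP: (y01 n).
Qed.

Let q_ge0 : 0 <= q.
Proof. by apply: le_trans (y_le_q 0); case/andP: (y01 0). Qed.

Let q01 : 0 <= q <= 1.
Proof. by rewrite q_ge0 q_le1. Qed.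

(* The partial sums of [pgf b] are Lipschitz on [0, 1], so they pass to
   the limit of [y n.+1 = pgf b (y n)]. *)
Lemma pgf_extinction_le : pgf b q <= q.
Proof.
apply: pgf_le => // N; rewrite leNgt; apply/negP => hN.
set P := \sum_(j < N) b j * q ^+ j in hN.
pose K : R := (N * N)%:R + 1.
have K0 : 0 < K by rewrite /K ltr_wpDl ?ler0n.
have d0 : 0 < (P - q) / K by rewrite divr_gt0 // subr_gt0.
have [_ [n _ <-] hn] := sup_adherent d0 y_has_sup.
rewrite -/q in hn.
have /andP[yn0 yn1] := y01 n.
have hP := psum_lipschitz N hb yn0 (y_le_q n) q_le1.
have := psum_le_pgf N hb (y01 n); rewrite -yS => hPy.
have hdK : (P - q) / K * K = P - q by rewrite divfK // gt_eqF.
have := y_le_q n.+1; rewrite -/P /K in hP hdK *.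
nra.
Qed.

Lemma pgf_iterp_extinction n : 0 <= pgf (iterp b n) q <= q.
Proof.
elim: n => [|n IH]; first by rewrite iterp0 pgf_id_coef // q_ge0 lexx.
have /andP[I0 I1] := IH; have Ir : 0 <= pgf (iterp b n) q <= 1.
  by rewrite I0 (le_trans I1 q_le1).
rewrite iterpS pgf_comp //; last exact: subprob_iterp.
have /andP[-> _] := pgf_ge0_le1 hb Ir.
exact: le_trans (le_pgf hb I0 I1 q_le1) pgf_extinction_le.
Qed.

(* [y n + iterp b n z * q ^+ z <= pgf (iterp b n) q <= q], and [y n] tends to [q]. *)
Lemma iterp_coef_weighted_extinction : 0 < q -> forall d, 0 < d ->
  exists N, forall n z, (N <= n)%N -> (1 <= z)%N -> iterp b n z * q ^+ z <= d.
Proof.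
move=> q0 d d0; have [_ [N _ <-] hN] := sup_adherent d0 y_has_sup.
exists N => n z Nn z1; rewrite -/q in hN.
have := coef0_coefX_le_pgf (subprob_iterp n hb) q01 z1.
have /andP[_ hq] := pgf_iterp_extinction n.
have := y_nondecreasing Nn; rewrite /y in hN *; lra.
Qed.

Lemma pgf_iterp_geometric t n : b 0 = 0 -> 0 <= t <= 1 ->
  0 <= pgf (iterp b n) t <= t * (b 1 + (1 - b 1) * t) ^+ n.
Proof.
move=> b00 /[dup] t01 /andP[t0 t1].
have b10 := subprob_ge0 1 hb; have b11 := subprob_le1 1 hb.
set r := b 1 + (1 - b 1) * t.
have r0 : 0 <= r by rewrite addr_ge0 // mulr_ge0 // subr_ge0.
have r1 : r <= 1 by rewrite /r; nra.
elim: n => [|n IH]; first by rewrite iterp0 pgf_id_coef // expr0 mulr1 lexx andbT.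
rewrite iterpS pgf_comp //; last exact: subprob_iterp.
have /andP[F0 Fr] := IH; set F := pgf (iterp b n) t in F0 Fr *.
have Ft : F <= t by apply: le_trans Fr _; rewrite ler_piMr // exprn_ile1.
have F01 : 0 <= F <= 1 by rewrite F0 (le_trans Ft).
have /andP[-> _] := pgf_ge0_le1 hb F01.
apply: le_trans (pgf_le hb F01 (fun N => psum_le_coef1 N hb b00 F01)) _.
rewrite exprSr mulrA; apply: ler_pM => //.
  by rewrite addr_ge0 // mulr_ge0 // subr_ge0.
by rewrite lerD2l ler_wpM2l // subr_ge0.
Qed.

Lemma iterp_coef_weighted_survival : q = 0 -> b 1 < 1 -> forall d, 0 < d ->
  exists N, forall n z, (N <= n)%N -> (1 <= z)%N ->
  iterp b n z * (2^-1) ^+ z <= d.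
Proof.
move=> q0 b1 d d0.
have b00 : b 0 = 0.
  apply/le_anti; rewrite (subprob_ge0 0 hb) andbT.
  by have := y_le_q 1; rewrite q0 yS /y /= pgf0.
set t : R := 2^-1; have t01 : 0 <= t <= 1 by apply/andP; rewrite /t; split; lra.
have b10 := subprob_ge0 1 hb.
set r := b 1 + (1 - b 1) * t.
have r0 : 0 <= r by rewrite /r /t; lra.
have hr : `|r| < 1 by rewrite ger0_norm // /r /t; lra.
have /cvgrPdist_le /(_ d d0) [N _ HN] := cvg_expr hr.
exists N => n z Nn z1; have := HN n Nn.
rewrite /= sub0r normrN ger0_norm ?exprn_ge0 // => rn.
have := coef0_coefX_le_pgf (subprob_iterp n hb) t01 z1.
have /andP[_ Fn] := pgf_iterp_geometric n b00 t01.
have := y01 n; rewrite /y /t -/r in Fn *.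
have := exprn_ge0 n r0; move=> ? /andP[? ?]; nra.
Qed.

Lemma iterp_coef_weighted_vanish : b 1 < 1 -> exists2 t : R, 0 < t <= 1 &
  forall d, 0 < d -> exists N, forall n z, (N <= n)%N -> (1 <= z)%N ->
  iterp b n z * t ^+ z <= d.
Proof.
move=> b1; have [q0|q0] := eqVneq q 0.
  by exists 2^-1; [apply/andP; split; lra | exact: iterp_coef_weighted_survival].
have qpos : 0 < q by rewrite lt_def q0 q_ge0.
by exists q; [rewrite qpos q_le1 | exact: iterp_coef_weighted_extinction].
Qed.

End Extinction.

Lemma sum_strict_subseq (R : realType) (F : nat -> R) (g : nat -> nat) n :
  (forall i, 0 <= F i) -> (forall l, (g l < g l.+1)%N) ->
  \sum_(l < n) F (g l) <= \sum_(x < g n) F x.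
Proof.
move=> F0 hg; elim: n => [|n IH]; first by rewrite big_ord0 sumr_ge0.
rewrite big_ord_recr /=; apply: le_trans (_ : \sum_(x < (g n).+1) F x <= _).
  by rewrite big_ord_recr /= lerD2r.
rewrite -(subnKC (hg n)) big_split_ord /= lerDl.
by apply: sumr_ge0.
Qed.

Section Concentration.
Variable R : realType.
Variable b : nat -> R.
Hypothesis hb : subprob b.

Lemma pow_coef_single u0 z k : (forall i, i != u0 -> b i = 0) ->
  pow_coef b z k <= b u0 ^+ z.
Proof.
move=> bu0; elim: z k => [|z IH] k; first by rewrite expr0 /=; case: (k == 0).
rewrite pow_coefS /cauchy_prod exprS.
apply: le_trans (_ : \sum_(i < k.+1) b i * b u0 ^+ z <= _).
  by apply: ler_sum => i _; rewrite ler_wpM2l ?(subprob_ge0 _ hb).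
rewrite -mulr_suml ler_wpM2r ?exprn_ge0 ?(subprob_ge0 _ hb) //.
case: (ltnP u0 k.+1) => [uk|ku].
  by rewrite (bigD1 (Ordinal uk)) //= big1 ?addr0 // => i /bu0.
rewrite big1 ?(subprob_ge0 _ hb) // => i _.
by rewrite bu0 // neq_ltn (leq_trans (ltn_ord i)).
Qed.

Lemma pow_coefS_le w x j M : (forall k, pow_coef b w k <= M) ->
  pow_coef b w.+1 x <=
  (if (j <= x)%N then b j * pow_coef b w (x - j) else 0) + (1 - b j) * M.
Proof.
move=> hM; have M0 : 0 <= M := le_trans (pow_coef_ge0 w 0 hb) (hM 0%N).
have b0 i : 0 <= b i := subprob_ge0 i hb.
rewrite pow_coefS /cauchy_prod.
case: (leqP j x) => hj.
  pose J : 'I_x.+1 := Ordinal (hj : (j < x.+1)%N).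
  rewrite (bigD1 J) //= lerD2l.
  have hs := hb.2 x.+1; rewrite (bigD1 J) //= in hs.
  apply: le_trans (_ : \sum_(i < x.+1 | i != J) b i * M <= _).
    by apply: ler_sum => i _; apply: ler_wpM2l.
  rewrite -mulr_suml; set S := \sum_(i < x.+1 | _) b i in hs *.
  nra.
have hs := hb.2 j.+1; rewrite big_ord_recr /= in hs.
apply: le_trans (_ : \sum_(i < x.+1) b i * M <= _).
  by apply: ler_sum => i _; apply: ler_wpM2l.
rewrite -mulr_suml add0r ler_wpM2r // lerBrDr.
apply: le_trans hs; rewrite lerD2r -(subnKC hj) big_split_ord /= lerDl.
exact: sumr_ge0.
Qed.

Lemma pow_coef_near_max w x j M g : (forall k, pow_coef b w k <= M) ->
  0 < b j -> g < b j * M -> M - g <= pow_coef b w.+1 x ->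
  (j <= x)%N /\ M - g / b j <= pow_coef b w (x - j).
Proof.
move=> hM bj gM hx; have := pow_coefS_le x j hM.
case: (leqP j x) => hjx hle; last by move: hx hle; nra.
split=> //.
have : M - pow_coef b w (x - j) <= g / b j by rewrite ler_pdivlMr //; nra.
lra.
Qed.

Section NearMaximalChain.
Variables (u v W m k0 : nat) (beta M c : R).
Hypotheses (beta0 : 0 < beta) (beta_u : beta <= b u) (beta_v : beta <= b v).
Hypotheses (c0 : 0 <= c) (cM : c < M).
Hypothesis bound_M : forall w k, (W <= w)%N -> pow_coef b w k <= M.
Hypothesis near_max_k0 : M - c * beta ^+ m <= pow_coef b (W + m) k0.

Let pos l j := (l * u + (j - l) * v)%N.

(* Walking back from [k0] by [j] steps of size [u] or [v] keeps the
   coefficient near the bound; the loss factor [1 / beta] per step is paid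
   for by the initial precision [c * beta ^+ m]. *)
Lemma near_max_chain j : (j <= m)%N -> forall l, (l <= j)%N ->
  (pos l j <= k0)%N /\
  M - c * beta ^+ (m - j) <= pow_coef b (W + (m - j)) (k0 - pos l j).
Proof.
have beta1 : beta <= 1 := le_trans beta_u (subprob_le1 u hb).
elim: j => [_ l|j IH jm l lj].
  rewrite leqn0 => /eqP ->.
  by rewrite /pos subnn !mul0n !subn0 addn0.
have [l0 [j0 [l0j [beta_j0 posE]]]] : exists l0 j0, (l0 <= j)%N /\
    beta <= b j0 /\ pos l j.+1 = (pos l0 j + j0)%N.
  case: (leqP l j) => [hlj|hjl].
    by exists l, v; rewrite /pos subSn // mulSn addnA addnAC.
  have -> : l = j.+1 by apply/eqP; rewrite eqn_leq lj.
  by exists j, u; rewrite /pos !subnn !mul0n !addn0 mulSn addnC.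
have [posk0 near] := IH (ltnW jm) l0 l0j.
have bj0 : 0 < b j0 := lt_le_trans beta0 beta_j0.
have mjS : (m - j = (m - j.+1).+1)%N by rewrite subnSK.
rewrite mjS addnS exprS in near.
have hM k : pow_coef b (W + (m - j.+1)) k <= M by apply: bound_M; rewrite leq_addr.
set X := beta ^+ (m - j.+1) in near *.
have X0 : 0 <= X := exprn_ge0 _ (ltW beta0).
have X1 : X <= 1 := exprn_ile1 _ (ltW beta0) beta1.
have gM : c * (beta * X) < b j0 * M.
  have h1 : c * (beta * X) <= c * beta.
    by apply: ler_wpM2l => //; exact: ler_piMr (ltW beta0) X1.
  have h2 : c * beta < beta * M by rewrite mulrC ltr_pM2l.
  have h3 : beta * M <= b j0 * M.
    by apply: ler_wpM2r; rewrite // ltW // (le_lt_trans c0 cM).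
  lra.
have [j0x near'] := pow_coef_near_max hM bj0 gM near.
rewrite posE; split; first by rewrite -leq_subRL.
rewrite subnDA; apply: le_trans near'; rewrite lerD2l lerN2 ler_pdivrMr //.
have cX0 : 0 <= c * X by rewrite mulr_ge0.
nra.
Qed.

Lemma near_max_count : (u < v)%N -> m.+1%:R * (M - c) <= 1.
Proof.
move=> uv; have [posm _] := near_max_chain (leqnn m) (leq0n m).
rewrite /pos subn0 mul0n add0n in posm.
pose idx l := (k0 - m * v + l * (v - u))%N.
have idxE l : (l <= m)%N -> (k0 - pos l m = idx l)%N.
  move=> lm; have : (pos l m + l * (v - u) = m * v)%N.
    by rewrite /pos addnAC -mulnDr (subnKC (ltnW uv)) -mulnDl subnKC.
  rewrite /idx; move: (pos l m) (l * (v - u))%N posm => P L posm PL.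
  have PLk : (P + L <= k0)%N by rewrite PL.
  rewrite -PL subnDA subnK // leq_subRL //; exact: leq_trans (leq_addr L P) PLk.
apply: le_trans (_ : \sum_(l < m.+1) pow_coef b W (idx l) <= _).
  have -> : m.+1%:R * (M - c) = \sum_(l < m.+1) (M - c).
    by rewrite sumr_const card_ord mulr_natl.
  apply: ler_sum => l _.
  have lm : (l <= m)%N by rewrite -ltnS.
  have [_ near] := near_max_chain (leqnn m) lm.
  by rewrite subnn addn0 expr0 mulr1 idxE in near.
apply: le_trans (@sum_strict_subseq _ (pow_coef b W) idx m.+1 _ _) _.
- by move=> k; exact: pow_coef_ge0.
- by move=> l; rewrite /idx ltn_add2l ltn_mul2r subn_gt0 uv ltnSn.
- exact: (subprob_pow_coef W hb).2.
Qed.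

End NearMaximalChain.

Let s z := sup (range (pow_coef b z)).

Let s_has_sup z : has_sup (range (pow_coef b z)).
Proof.
split; first by exists (pow_coef b z 0), 0%N.
by exists 1 => _ [k _ <-]; exact: pow_coef_le1.
Qed.

Let pow_coef_le_s z k : pow_coef b z k <= s z.
Proof. by apply: sup_upper_bound; [exact: s_has_sup | exists k]. Qed.

Let s_ge0 z : 0 <= s z.
Proof. exact: le_trans (pow_coef_ge0 z 0 hb) (pow_coef_le_s z 0). Qed.

Let s_nonincreasing : nonincreasing_seq s.
Proof.
apply/nonincreasing_seqP => z.
apply: ge_sup; first by exists (pow_coef b z.+1 0), 0%N.
move=> _ [k _ <-]; rewrite pow_coefS.
apply: le_trans (_ : \sum_(i < k.+1) b i * s z <= _).
  by apply: ler_sum => i _; rewrite ler_wpM2l ?(subprob_ge0 _ hb).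
by rewrite -mulr_suml ler_piMl ?(hb.2 k.+1).
Qed.

(* Otherwise [mu := inf s > 0]; with [M = mu + d] and [c = mu / 4],
   [near_max_count] gives [(m + 1) * 3/4 * mu <= 1], against [2 < m * mu]. *)
Lemma pow_coef_vanish_spread u v : (u < v)%N -> 0 < b u -> 0 < b v ->
  forall e, 0 < e -> exists Z, forall z k, (Z <= z)%N -> pow_coef b z k <= e.
Proof.
move=> uv bu bv e e0; apply: contrapT => hne.
have s_ge_e z : e <= s z.
  rewrite leNgt; apply/negP => sz; apply: hne; exists z => z' k zz'.
  exact: le_trans (pow_coef_le_s z' k) (le_trans (s_nonincreasing zz') (ltW sz)).
have hinf : has_inf (range s).
  by split; [exists (s 0%N), 0%N | exists 0 => _ [z _ <-]].
pose mu := inf (range s).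
have mu_le_s z : mu <= s z by apply: (ge_inf hinf.2); exists z.
have mu0 : 0 < mu.
  apply: lt_le_trans e0 _; apply: lb_le_inf; first by exists (s 0%N), 0%N.
  by move=> _ [z _ <-].
pose beta := Num.min (b u) (b v).
have beta0 : 0 < beta by rewrite lt_min bu bv.
have [m hm] : exists m : nat, 2 < m%:R * mu.
  exists (Num.Def.archi_bound (2 / mu)).
  rewrite -ltr_pdivrMr //; apply: archi_boundP.
  by rewrite divr_ge0 ?ltW.
pose d := mu * beta ^+ m / 8.
have d0 : 0 < d by rewrite /d !mulr_gt0 ?exprn_gt0.
have [_ [W _ <-] sW] := inf_adherent d0 hinf.
have [_ [k0 _ <-] hk0] := sup_adherent d0 (s_has_sup (W + m)).
have mu4 : 0 <= mu / 4 by rewrite divr_ge0 ?ltW.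
have beta_u : beta <= b u by rewrite ge_min lexx.
have beta_v : beta <= b v by rewrite ge_min lexx orbT.
have count := @near_max_count u v W m k0 beta (mu + d) (mu / 4) beta0
  beta_u beta_v mu4.
have : m.+1%:R * (mu + d - mu / 4) <= 1.
  apply: count => //.
  - lra.
  - move=> w k Ww; apply: le_trans (pow_coef_le_s w k) _.
    exact: le_trans (s_nonincreasing Ww) (ltW sW).
  - have := mu_le_s (W + m)%N; rewrite /s /d in hk0 *; lra.
rewrite -natr1; nra.
Qed.

Lemma two_pos_coefs : ~ (exists u0, forall i, i != u0 -> b i = 0) ->
  exists u v, [/\ (u < v)%N, 0 < b u & 0 < b v].
Proof.
move=> not_single.
have pos i : b i != 0 -> 0 < b i by rewrite lt_def => ->; exact: subprob_ge0.
have [u bu] : exists u, b u != 0.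
  apply: contrapT => none; apply: not_single; exists 0%N => i _.
  by apply: contrapT => bi; apply: none; exists i; apply/eqP.
have [v vu bv] : exists2 v, v != u & b v != 0.
  apply: contrapT => none; apply: not_single; exists u => i iu.
  by apply: contrapT => bi; apply: none; exists i => //; apply/eqP.
case: (ltngtP u v) => [uv|vu'|uv]; first by exists u, v; rewrite uv !pos.
  by exists v, u; rewrite vu' !pos.
by rewrite uv eqxx in vu.
Qed.

Lemma pow_coef_vanish : (forall i, b i < 1) ->
  forall e, 0 < e -> exists Z, forall z k, (Z <= z)%N -> pow_coef b z k <= e.
Proof.
move=> b1 e e0.
have [[u0 single]|/two_pos_coefs[u [v [uv bu bv]]]] :=
  pselect (exists u0, forall i, i != u0 -> b i = 0); last first.
  exact: pow_coef_vanish_spread uv bu bv e e0.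
have bu0 : `|b u0| < 1 by rewrite ger0_norm ?(subprob_ge0 _ hb).
have /cvgrPdist_le /(_ e e0) [Z _ hZ] := cvg_expr bu0.
exists Z => z k Zz; apply: le_trans (pow_coef_single z k single) _.
have := hZ z Zz; rewrite /= sub0r normrN ger0_norm //.
by rewrite exprn_ge0 ?(subprob_ge0 _ hb).
Qed.

End Concentration.

Section Domination.
Variable R : realType.
Implicit Types (a x y : nat -> R).

Lemma pow_coef_norm_le x y : (forall i, `|x i| <= y i) ->
  forall j k, `|pow_coef x j k| <= pow_coef y j k.
Proof.
move=> xy; elim=> [|j IH] k; first by rewrite /= normr_nat.
rewrite !pow_coefS; apply: le_trans (ler_norm_sum _ _ _) _.
by apply: ler_sum => i _; rewrite normrM ler_pM.
Qed.

Lemma comp_coef_norm_le a x y k : (forall i, `|x i| <= y i) -> subprob y ->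
  subprob (fun i => `|a i|) -> `|comp_coef a x k| <= comp_coef (fun i => `|a i|) y k.
Proof.
move=> xy hy ha; have [cvg _] := comp_coef_subprob_series k ha hy.
have g0 j : 0 <= `|a j| * pow_coef y j k by rewrite mulr_ge0 ?pow_coef_ge0.
have fg j : `|a j * pow_coef x j k| <= `|a j| * pow_coef y j k.
  by rewrite normrM ler_wpM2l ?pow_coef_norm_le.
have cvf : cvgn [normed series (fun j => a j * pow_coef x j k)].
  exact: series_le_cvg g0 fg cvg.
exact: le_trans (lim_series_norm cvf) (lim_series_le cvf cvg fg).
Qed.

Lemma iterp_norm_le a n k : subprob (fun i => `|a i|) ->
  `|iterp a n k| <= iterp (fun i => `|a i|) n k.
Proof.
move=> ha; elim: n k => [|n IH] k; first by rewrite /= normr_nat.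
by apply: comp_coef_norm_le => //; exact: subprob_iterp.
Qed.

End Domination.

Lemma sum_ltn_const (R : realType) (D : R) (Z N : nat) :
  \sum_(z < N) (if (z < Z)%N then D else 0) = (minn N Z)%:R * D.
Proof.
elim: N => [|N IH]; first by rewrite big_ord0 min0n mul0r.
rewrite big_ord_recr /= IH; case: (ltnP N Z) => h.
  by rewrite (minn_idPl h) -natr1 mulrDl mul1r.
by rewrite (minn_idPr (leqW h)) addr0.
Qed.

Section Vanishing.
Variable R : realType.
Variable b : nat -> R.
Hypothesis hb : subprob b.

Lemma comp_coef_le_split c k Z (D e : R) : subprob c -> (1 <= k)%N ->
  0 <= D -> 0 <= e ->
  (forall z, (0 < z)%N -> (z < Z)%N -> c z <= D) ->
  (forall z, (Z <= z)%N -> pow_coef b z k <= e) ->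
  comp_coef c b k <= Z%:R * D + e.
Proof.
move=> hc k1 D0 e0 cD Pe; have [cvg _] := comp_coef_subprob_series k hc hb.
apply: limr_le cvg _; apply: nearW => N; rewrite seriesEord /=.
have term z : c z * pow_coef b z k <= (if (z < Z)%N then D else 0) + e * c z.
  have c0 := subprob_ge0 z hc; have P0 := pow_coef_ge0 z k hb.
  case: ltnP => [zZ|Zz]; last by rewrite add0r mulrC ler_wpM2r ?Pe.
  case: z zZ c0 P0 => [|z] zZ c0 P0.
    by rewrite /= eqn0Ngt k1 mulr0 addr_ge0 ?mulr_ge0.
  rewrite -[leLHS]addr0 lerD ?mulr_ge0 //.
  by apply: le_trans (cD _ (ltn0Sn z) zZ); rewrite ler_piMr ?pow_coef_le1.
apply: le_trans (_ : \sum_(z < N) ((if (z < Z)%N then D else 0) + e * c z) <= _).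
  by apply: ler_sum => z _; exact: term.
rewrite big_split /= -mulr_sumr sum_ltn_const lerD ?ler_wpM2r ?ler_nat ?geq_minr //.
by rewrite ler_piMr ?(hc.2 N).
Qed.

Lemma iterp_coef_vanish : (forall i, b i < 1) ->
  forall e, 0 < e -> exists N, forall n k, (N <= n)%N -> (1 <= k)%N ->
  iterp b n k <= e.
Proof.
move=> b1 e e0; have e2 : 0 < e / 2 by rewrite divr_gt0.
have [Z hZ] := pow_coef_vanish hb b1 e2.
have [t /andP[t0 t1] decay] := iterp_coef_weighted_vanish hb (b1 1%N).
pose D := e / 2 / Z.+1%:R.
have D0 : 0 < D by rewrite divr_gt0.
have ZD : Z%:R * D <= e / 2.
  rewrite /D mulrCA; apply: ler_piMr; first exact: ltW.
  by rewrite ler_pdivrMr ?ltr0Sn // mul1r ler_nat.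
have [N hN] := decay (D * t ^+ Z) (mulr_gt0 D0 (exprn_gt0 _ t0)).
exists N.+1 => -[|n] k // Nn k1; rewrite iterpSr //.
apply: le_trans (_ : Z%:R * D + e / 2 <= _); last by lra.
apply: comp_coef_le_split (subprob_iterp n hb) k1 (ltW D0) (ltW e2) _ (hZ ^~ k).
move=> z z0 zZ; rewrite -(ler_pM2r (exprn_gt0 z t0)).
apply: le_trans (hN n z Nn z0) _; apply: ler_wpM2l; first exact: ltW.
by apply: (ler_wiXn2l (ltW t0) t1); exact: ltnW.
Qed.

End Vanishing.

Lemma subprob_norm (R : realType) (a : nat -> R) :
  (\sum_(0 <= i <oo) (`|a i|)%:E <= 1)%E -> subprob (fun i => `|a i|).
Proof.
move=> hsum; split=> [i|n]; first exact: normr_ge0.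
rewrite -lee_fin -sumEFin; apply: le_trans hsum.
have := @nneseries_lim_ge R (fun i => (`|a i|)%:E) xpredT 0 n.
by rewrite big_mkord; apply=> i _ _; rewrite lee_fin.
Qed.

Lemma sup_coef_cvg0 (R : realType) (a : nat -> R) :
  (forall e, 0 < e -> exists N, forall n k, (N <= n)%N -> (1 <= k)%N ->
     `|iterp a n k| <= e) ->
  (sup_coef a n @[n --> \oo] --> (0 : \bar R)%E)%classic.
Proof.
move=> small.
have sup_ge0 n : (0 <= sup_coef a n)%E.
  apply: le_trans (_ : (`|iterp a n 1|)%:E <= _)%E; first by rewrite lee_fin.
  by apply: ereal_sup_ubound; exists 1%N.
have sup_le n e : (forall k, (1 <= k)%N -> `|iterp a n k| <= e) ->
    (sup_coef a n <= e%:E)%E.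
  by move=> h; apply: ub_ereal_sup => _ [k hk <-]; rewrite lee_fin h.
have [N1 hN1] := small 1 ltr01.
apply: cvg_EFin.
  exists N1 => // n /= hn.
  by rewrite ge0_fin_numE // (le_lt_trans (sup_le n 1 (hN1 n ^~ hn))) ?ltey.
apply/cvgrPdist_le => e e0; have [N hN] := small e e0.
exists N => // n /= hn; have hs := sup_le n e (hN n ^~ hn).
rewrite sub0r normrN ger0_norm ?fine_ge0 //.
by rewrite -lee_fin fineK // ge0_fin_numE // (le_lt_trans hs) ?ltey.
Qed.

Unset Implicit Arguments.

Theorem corollary2 (R : realType) (a : nat -> R)
  (ha : forall i, -1 < a i < 1)
  (hsum : (\sum_(0 <= i <oo) (`|a i|)%:E <= 1)%E) :
  (sup_coef a n @[n --> \oo] --> (0 : \bar R)%E)%classic.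
Proof.
have hb := subprob_norm hsum.
have hb1 i : `|a i| < 1 by rewrite ltr_norml.
apply: sup_coef_cvg0 => e e0.
have [N hN] := iterp_coef_vanish hb hb1 e0.
exists N => n k Nn k1; exact: le_trans (iterp_norm_le n k hb) (hN n k Nn k1).
Qed.
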